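(* For every $D$-sequence $\mathbf{b}$, the topology $\tau_{\mathbf{b}}$ is strictly finer than $\lambda_{\mathbf{b}}$; in particular the identity $(\mathbb{Z},\tau_{\mathbf{b}})\to(\mathbb{Z},\lambda_{\mathbf{b}})$ is a continuous isomorphism which is not a homeomorphism.
   Context: $\mathbb{T}=\mathbb{R}/\mathbb{Z}$; $\mathbb{T}_m=[-\frac{1}{4m},\frac{1}{4m}]+\mathbb{Z}$. A $D$-sequence is a sequence $\mathbf{b}=(b_n)_{n\in\mathbb{N}_0}$ of natural numbers with $b_0=1$, $b_n\mid b_{n+1}$, $b_n\neq b_{n+1}$. $\lambda_{\mathbf{b}}$ is the group topology on $\mathbb{Z}$ with neighborhood basis $\{b_n\mathbb{Z}\}_{n\in\mathbb{N}_0}$ at $0$. $\tau_{\mathbf{b}}$ is the group topology on $\mathbb{Z}$ with neighborhood basis at $0$ given by $V_{\mathbf{b},m}=\{k\in\mathbb{Z}: \frac{k}{b_n}+\mathbb{Z}\in\mathbb{T}_m \text{ for all } n\in\mathbb{N}\}$, $m\in\mathbb{N}$. *)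

From HB Require Import structures.
From mathcomp Require Import all_boot all_order all_algebra.
Set Implicit Arguments. Unset Strict Implicit. Unset Printing Implicit Defensive.
Import Order.TTheory GRing.Theory Num.Theory.
Local Open Scope ring_scope.

(* A D-sequence: b_0 = 1, b_n | b_{n+1}, b_n <> b_{n+1}, all natural numbers
   (positive, since b_0 = 1 and divisibility forces b_n > 0 ... we still
   require positivity explicitly as "natural numbers" in the paper are >= 1). *)
Definition Dseq (b : nat -> nat) : Prop :=
  b 0%N = 1%N /\ (forall n, (0 < b n)%N) /\
  (forall n, (b n %| b n.+1)%N) /\ (forall n, b n <> b n.+1).

(* x + Z lies in T_m = [-1/(4m), 1/(4m)] + Z (m >= 1). *)
Definition in_Tm (m : nat) (x : rat) : Prop :=
  exists j : int, `|x - j%:~R| <= (4 * m%:R)^-1.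

Definition lambda_nbhd (b : nat -> nat) (n : nat) (k : int) : Prop :=
  ((b n)%:Z %| k)%Z.

Definition V_nbhd (b : nat -> nat) (m : nat) (k : int) : Prop :=
  forall n : nat, (0 < n)%N -> in_Tm m (k%:~R / (b n)%:R).

Definition open_from_base (I : Type) (P : I -> Prop) (B : I -> int -> Prop)
  (U : int -> Prop) : Prop :=
  forall x, U x -> exists i, P i /\ forall y, B i y -> U (x + y).

Definition lambda_open (b : nat -> nat) : (int -> Prop) -> Prop :=
  open_from_base (fun _ : nat => True) (lambda_nbhd b).

Definition tau_open (b : nat -> nat) : (int -> Prop) -> Prop :=
  open_from_base (fun m : nat => (0 < m)%N) (V_nbhd b).

Definition finer (T1 T2 : (int -> Prop) -> Prop) : Prop :=
  forall U, T2 U -> T1 U.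

Definition strictly_finer (T1 T2 : (int -> Prop) -> Prop) : Prop :=
  finer T1 T2 /\ ~ finer T2 T1.

Set Warnings "-notation-overridden,-ambiguous-paths".
From HB Require Import structures.
From mathcomp Require Import all_boot all_order all_algebra.
From mathcomp Require Import zify ring lra.
Import Order.TTheory GRing.Theory Num.Theory.
Local Open Scope ring_scope.

(* Both topologies are generated by neighbourhood bases at 0, so comparing
   them reduces to comparing basic neighbourhoods (finer_from_base).
   - tau_b is finer: V_{b,b_n} is contained in b_n Z, because
     |k/b_n - j| <= 1/(4 b_n) forces |k - j b_n| <= 1/4, i.e. k = j b_n.
   - lambda_b is not finer: the tau-interior of V_{b,2} is a tau-open set
     around 0 contained in V_{b,2}; if it were lambda-open it would contain
     some b_n Z.  But with q = b_{n+1}/b_n >= 2 and c = q/2 (rounded down),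
     c b_n lies in b_n Z while c b_n / b_{n+1} = c/q is in [1/3, 1/2], at
     distance >= 1/3 > 1/8 from Z, so c b_n is not in V_{b,2}. *)

Lemma in_Tm_int {m B : nat} {a : int} : (0 < B)%N ->
  in_Tm m (a%:~R / B%:R) -> exists j : int, (4 * m)%:Z * `|a - j * B%:Z| <= B%:Z.
Proof.
move=> B_gt0 [j Hj]; exists j.
have BR : (0 : rat) < B%:R by rewrite ltr0n.
have E : (a - j * B%:Z)%:~R = (a%:~R / B%:R - j%:~R) * (B%:R : rat).
  by rewrite rmorphB rmorphM /= mulrBl -mulrA mulVf ?gt_eqF // mulr1.
have natz n : (n%:Z)%:~R = (n%:R : rat) by rewrite -pmulrn.
rewrite -(ler_int rat) rmorphM /= intr_norm E normrM (gtr0_norm BR) !natz natrM.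
have [->|m_gt0] := posnP m; first by rewrite mulr0 mul0r ler0n.
have m4 : (0 : rat) < 4 * m%:R by rewrite mulr_gt0 // ltr0n.
rewrite mulrA -[X in _ <= X]mul1r ler_wpM2r ?ler0n //.
by have := ler_wpM2l (ltW m4) Hj; rewrite mulfV ?gt_eqF.
Qed.

Lemma V_nbhd0 (b : nat -> nat) (m : nat) : V_nbhd b m 0.
Proof.
move=> n _; exists 0.
by rewrite mul0r subr0 normr0 invr_ge0 mulr_ge0 // ler0n.
Qed.

Lemma V_nbhd_add (b : nat -> nat) (m : nat) (y z : int) :
  V_nbhd b (2 * m) y -> V_nbhd b (2 * m) z -> V_nbhd b m (y + z).
Proof.
move=> Vy Vz n n_gt0.
have [j1 H1] := Vy n n_gt0; have [j2 H2] := Vz n n_gt0.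
exists (j1 + j2).
have -> : (y + z)%:~R / (b n)%:R - (j1 + j2)%:~R =
  ((y%:~R / (b n)%:R - j1%:~R) + (z%:~R / (b n)%:R - j2%:~R) : rat).
  by rewrite !rmorphD /=; ring.
apply: le_trans (ler_normD _ _) _; apply: le_trans (lerD H1 H2) _.
have [->|m_gt0] := posnP m; first by rewrite !mulr0 invr0 addr0.
rewrite natrM le_eqVlt; apply/orP; left; apply/eqP; field.
by rewrite pnatr_eq0 -lt0n.
Qed.

Lemma V_nbhd_dvd (b : nat -> nat) (n : nat) (k : int) :
  (0 < n)%N -> (0 < b n)%N -> V_nbhd b (b n) k -> ((b n)%:Z %| k)%Z.
Proof.
move=> n_gt0 bn_gt0 Vk.
have [j Hj] := in_Tm_int bn_gt0 (Vk n n_gt0).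
have bz : 0 < (b n)%:Z by rewrite ltz_nat.
suff -> : k = j * (b n)%:Z by rewrite dvdz_mull.
apply/eqP; rewrite -subr_eq0; apply/eqP.
move: Hj; rewrite PoszM.
have [//|/eqP ne0] := (k - j * (b n)%:Z =P 0).
have : 1 <= `|k - j * (b n)%:Z| by rewrite -gtz0_ge1 normr_gt0.
nia.
Qed.

Lemma finer_from_base (I J : Type) (P : I -> Prop) (Q : J -> Prop)
    (B : I -> int -> Prop) (C : J -> int -> Prop) :
  (forall j, Q j -> exists i, P i /\ forall k, B i k -> C j k) ->
  finer (open_from_base P B) (open_from_base Q C).
Proof.
move=> BC U HU x Ux.
have [j [Qj Hj]] := HU x Ux; have [i [Pi Hi]] := BC j Qj.
by exists i; split => // y /Hi /Hj.
Qed.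

Definition tau_core (b : nat -> nat) (m : nat) (x : int) : Prop :=
  exists m', (0 < m')%N /\ forall y, V_nbhd b m' y -> V_nbhd b m (x + y).

(* The interior is open: a point x + y with y in V_{b,2m'} keeps the
   neighbourhood V_{b,2m'}, since V_{b,2m'} + V_{b,2m'} is inside V_{b,m'}. *)
Lemma tau_core_open (b : nat -> nat) (m : nat) : tau_open b (tau_core b m).
Proof.
move=> x [m' [m'_gt0 Hm']]; have m2_gt0 : (0 < 2 * m')%N by rewrite muln_gt0.
exists (2 * m')%N; split => // y Vy; exists (2 * m')%N; split => // z Vz.
by rewrite -addrA; apply: Hm'; apply: V_nbhd_add.
Qed.

Lemma tau_core0 (b : nat -> nat) (m : nat) : (0 < m)%N -> tau_core b m 0.
Proof. by move=> m_gt0; exists m; split => // y; rewrite add0r. Qed.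

Lemma tau_core_sub {b : nat -> nat} {m : nat} {x : int} :
  tau_core b m x -> V_nbhd b m x.
Proof. by move=> [m' [_ Hm']]; rewrite -[x]addr0; apply/Hm'/V_nbhd0. Qed.

(* If c >= 1 and q is 2c or 2c + 1, then c/q is at distance >= 1/3 from Z;
   in particular 8 |c - j q| > q for every integer j. *)
Lemma half_far_from_int (c q j : int) :
  1 <= c -> (q = 2 * c \/ q = 2 * c + 1) -> ~ (8 * `|c - j * q| <= q).
Proof.
move=> c_ge1 hq H.
have : 8 * c <= 8 * `|c - j * q|.
  rewrite ler_pM2l //; have [hj|hj] := lerP j 0.
  - by apply: le_trans (ler_norm _); nia.
  - by rewrite distrC; apply: le_trans (ler_norm _); nia.
lia.
Qed.

Lemma half_multiple_notin_V2 (b : nat -> nat) (n : nat) : Dseq b ->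
  ~ V_nbhd b 2 (((b n.+1 %/ b n) %/ 2 * b n)%N%:Z).
Proof.
move=> [_ [bpos [bdvd bneq]]] V2.
set q := (b n.+1 %/ b n)%N; set c := (q %/ 2)%N.
have Eq : b n.+1 = (q * b n)%N by rewrite divnK.
have q_ge2 : (2 <= q)%N.
  have := bpos n.+1; have := bneq n; rewrite Eq.
  by case: (q) => [|[|q']] //; rewrite mul1n.
have [j Hj] := in_Tm_int (bpos n.+1) (V2 n.+1 isT).
have bz : 0 < (b n)%:Z by rewrite ltz_nat bpos.
apply: (half_far_from_int c%:Z q%:Z j).
- by rewrite lez_nat /c; lia.
- by rewrite /c; lia.
move: Hj; rewrite -/q -/c Eq !PoszM.
have -> : c%:Z * (b n)%:Z - j * (q%:Z * (b n)%:Z) = (c%:Z - j * q%:Z) * (b n)%:Z.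
  by ring.
by rewrite normrM (gtr0_norm bz) mulrA ler_pM2r.
Qed.

Lemma tau_finer_lambda (b : nat -> nat) : Dseq b -> finer (tau_open b) (lambda_open b).
Proof.
move=> [b0 [bpos _]]; apply: finer_from_base => n _.
exists (b n); split; first exact: bpos.
move=> k Vk; rewrite /lambda_nbhd.
have [->|n_gt0] := posnP n; first by rewrite b0 dvd1z.
exact: V_nbhd_dvd.
Qed.

(* lambda_b is not finer than tau_b: the tau-open set tau_core b 2 contains
   no subgroup b_n Z. *)
Lemma lambda_not_finer_tau (b : nat -> nat) : Dseq b -> ~ finer (lambda_open b) (tau_open b).
Proof.
move=> Db H.
have [n [_ Hn]] := H _ (tau_core_open b 2) 0 (tau_core0 b 2 isT).
have k_in_bnZ : lambda_nbhd b n ((b n.+1 %/ b n) %/ 2 * b n)%N%:Z.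
  by rewrite /lambda_nbhd PoszM dvdz_mull.
have := tau_core_sub (Hn _ k_in_bnZ); rewrite add0r.
exact: half_multiple_notin_V2 b n Db.
Qed.

Theorem proposition3p7 (b : nat -> nat) :
  Dseq b -> strictly_finer (tau_open b) (lambda_open b).
Proof.
move=> Db; split; [exact: tau_finer_lambda | exact: lambda_not_finer_tau].
Qed.
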